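(* Let $J$ be an indecomposable module in category $\mathcal{J}$, let $\lambda\in\mathbb{C}^n$ be a weight of $J$, and let $U=J_\lambda$. For $j=1,\dots,n$ and $s\in\mathbb{Z}^n$, define $D_j(s)\in\mathrm{End}\,U$ by $D_j(s)u=e_{-s}\,(d_j(s)u)$. Then for all $j,k$ and $s,m\in\mathbb{Z}^n$, $$[D_j(s),D_k(m)]=m_j\big(D_k(s+m)-D_k(m)\big)-s_k\big(D_j(s+m)-D_j(s)\big).$$
   Context: Let $n\ge 1$. Let $\mathcal{F}(\mathbb{T}^n)$ be the commutative algebra with $\mathbb{C}$-basis $e_m=e^{2\pi i m\cdot x}$, $m\in\mathbb{Z}^n$, and $e_me_k=e_{m+k}$. Let $W_n$ be the Lie algebra with $\mathbb{C}$-basis $d_j(s)=\frac{1}{2\pi i}e^{2\pi i s\cdot x}\frac{\partial}{\partial x^j}$, for $j=1,\dots,n$ and $s\in\mathbb{Z}^n$, and bracket $$[d_j(s),d_k(m)]=m_j\,d_k(s+m)-s_k\,d_j(s+m).$$ $W_n$ acts on $\mathcal{F}(\mathbb{T}^n)$ by derivations via $d_j(s)e_m=m_je_{m+s}$. Write $d_j=d_j(0)$. Category $\mathcal{J}$ consists of $W_n$-modules $J$ that are also $\mathcal{F}(\mathbb{T}^n)$-modules and satisfy: (J1) each $d_j$ acts diagonalizably on $J$; (J2) $J$ is a free $\mathcal{F}(\mathbb{T}^n)$-module of finite rank; (J3) $u(fw)=(uf)w+f(uw)$ for all $u\in W_n$, $f\in\mathcal{F}(\mathbb{T}^n)$, $w\in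 J$. For $\mu\in\mathbb{C}^n$, the weight space is $J_\mu=\{w\in J: d_jw=\mu_jw \text{ for all } j\}$. Submodules are subspaces invariant under both $W_n$ and $\mathcal{F}(\mathbb{T}^n)$. Indecomposable modules are nonzero. *)

From HB Require Import structures.
From mathcomp Require Import all_boot all_order all_algebra.
From mathcomp Require Import complex.
From mathcomp Require Import Rstruct.
From Stdlib Require Import Rdefinitions.
Set Implicit Arguments. Unset Strict Implicit. Unset Printing Implicit Defensive.
Import GRing.Theory.
Local Open Scope ring_scope.

Definition CC : fieldType := (Rdefinitions.R)[i].

(* Z^n is represented as row vectors 'rV[int]_n; m_j is m 0 j. *)
Notation Zn n := 'rV[int]_n.

(* A "J-structure" on the C-vector space J: operators e m (action of the
   basis element e_m of F(T^n)) and d j s (action of d_j(s) in W_n). *)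
Section Jcat.
Variables (n : nat) (J : lmodType CC).
Variables (e : Zn n -> J -> J) (d : 'I_n -> Zn n -> J -> J).

Definition F_module : Prop :=
  (forall m, linear (e m)) /\ (forall w, e 0 w = w) /\
  (forall m k w, e (m + k) w = e m (e k w)).

Definition W_module : Prop :=
  (forall j s, linear (d j s)) /\
  (forall j k s m w,
     d j s (d k m w) - d k m (d j s w) =
     (m 0 j)%:~R *: d k (s + m) w - (s 0 k)%:~R *: d j (s + m) w).

Definition J1 : Prop :=
  forall j w, exists (r : seq (CC * J)),
    (forall p, p \in r -> d j 0 p.2 = p.1 *: p.2) /\
    w = \sum_(p <- r) p.2.

(* Action of f = sum_{m in s} f m e_m on w. *)
Definition Fact (s : seq (Zn n)) (f : Zn n -> CC) (w : J) : J :=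
  \sum_(m <- s) f m *: e m w.

(* (J2) J is a free F(T^n)-module of finite rank. *)
Definition J2 : Prop :=
  exists (r : nat) (b : 'I_r -> J),
    (forall w, exists (s : seq (Zn n)) (f : 'I_r -> Zn n -> CC),
        w = \sum_(i < r) Fact s (f i) (b i)) /\
    (forall (s : seq (Zn n)) (f : 'I_r -> Zn n -> CC), uniq s ->
        \sum_(i < r) Fact s (f i) (b i) = 0 ->
        forall i m, m \in s -> f i m = 0).

(* (J3) compatibility u(f w) = (u f) w + f (u w) on basis elements:
   d_j(s)(e_m w) = m_j e_{m+s} w + e_m (d_j(s) w). *)
Definition J3 : Prop :=
  forall j s m w, d j s (e m w) = (m 0 j)%:~R *: e (m + s) w + e m (d j s w).

Definition in_cat_J : Prop := F_module /\ W_module /\ J1 /\ J2 /\ J3.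

Definition submodule (A : J -> Prop) : Prop :=
  A 0 /\ (forall x y, A x -> A y -> A (x + y)) /\
  (forall (c : CC) x, A x -> A (c *: x)) /\
  (forall m x, A x -> A (e m x)) /\
  (forall j s x, A x -> A (d j s x)).

Definition indecomposable : Prop :=
  (exists w : J, w <> 0) /\
  forall A B : J -> Prop, submodule A -> submodule B ->
    (forall x, A x -> B x -> x = 0) ->
    (forall w, exists a b, A a /\ B b /\ w = a + b) ->
    (forall x, A x -> x = 0) \/ (forall x, B x -> x = 0).

Definition weight_space (mu : 'I_n -> CC) (w : J) : Prop :=
  forall j, d j 0 w = mu j *: w.

Definition is_weight (mu : 'I_n -> CC) : Prop :=
  exists w, w <> 0 /\ weight_space mu w.

Definition DD (j : 'I_n) (s : Zn n) (u : J) : J := e (- s) (d j s u).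

End Jcat.

From HB Require Import structures.
From mathcomp Require Import all_boot all_order all_algebra.
Set Implicit Arguments. Unset Strict Implicit. Unset Printing Implicit Defensive.
Import GRing.Theory.
Local Open Scope ring_scope.

(** Conjugating (J3) by [e_{-s}] shows that every [D_j(s)] is again a
    derivation along [F(T^n)], whence
    [D_j(s) D_k(m) = -m_j D_k(m) + e_{-s-m} d_j(s) d_k(m)], and the
    commutator reduces to the bracket of [W_n].  Similarly [d_j(s)]
    raises weights by [s] and [e_{-s}] lowers them by [s], so [D_j(s)]
    preserves weight spaces. *)

Section DerivationConjugates.
Variables (n : nat) (J : lmodType CC).
Variables (e : Zn n -> J -> J) (d : 'I_n -> Zn n -> J -> J).
Hypothesis e_linear : forall m, linear (e m).
Hypothesis eD : forall m k w, e (m + k) w = e m (e k w).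
Hypothesis d_linear : forall j s, linear (d j s).
Hypothesis d_bracket : forall j k s m w,
  d j s (d k m w) - d k m (d j s w) =
  (m 0 j)%:~R *: d k (s + m) w - (s 0 k)%:~R *: d j (s + m) w.
Hypothesis d_e : forall j s m w,
  d j s (e m w) = (m 0 j)%:~R *: e (m + s) w + e m (d j s w).

Let e_sub m : zmod_morphism (e m) := zmod_morphism_linear (e_linear m).
Let e_scale m : scalable (e m) := scalable_linear (e_linear m).
Let e_add m : {morph e m : x y / x + y} :=
  (GRing.semilinear_linear (e_linear m)).2.

Lemma eC m k w : e m (e k w) = e k (e m w).
Proof. by rewrite -!eD addrC. Qed.

Lemma DD_e j s m w :
  DD e d j s (e m w) = (m 0 j)%:~R *: e m w + e m (DD e d j s w).
Proof. by rewrite /DD d_e e_add e_scale -eD [m + s]addrC addKr eC. Qed.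

Lemma DD_DD j k s m u :
  DD e d j s (DD e d k m u) =
  - (m 0 j)%:~R *: DD e d k m u + e (- (s + m)) (d j s (d k m u)).
Proof.
rewrite [DD e d k m u in LHS]/DD DD_e -/(DD e d k m u) mxE intrN.
by rewrite [DD e d j s _]/DD -eD opprD [- m + _]addrC.
Qed.

Lemma DD_commutator j k s m u :
  DD e d j s (DD e d k m u) - DD e d k m (DD e d j s u) =
  (m 0 j)%:~R *: (DD e d k (s + m) u - DD e d k m u)
  - (s 0 k)%:~R *: (DD e d j (s + m) u - DD e d j s u).
Proof.
have bracket : e (- (s + m)) (d j s (d k m u)) - e (- (s + m)) (d k m (d j s u))
    = (m 0 j)%:~R *: DD e d k (s + m) u - (s 0 k)%:~R *: DD e d j (s + m) u.
  by rewrite -e_sub d_bracket e_sub !e_scale.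
rewrite !DD_DD [m + s]addrC [- (- _ *: _ + _)]opprD addrACA bracket.
rewrite !scalerBr !scaleNr opprK opprB addrC addrACA.
by congr (_ + _); rewrite addrC.
Qed.

Lemma e_weight mu (m : Zn n) w : weight_space d mu w ->
  weight_space d (fun k => mu k + (m 0 k)%:~R) (e m w).
Proof.
by move=> Hw k; rewrite d_e addr0 Hw e_scale -scalerDl [mu k + _]addrC.
Qed.

Lemma d_weight mu j (s : Zn n) w : weight_space d mu w ->
  weight_space d (fun k => mu k + (s 0 k)%:~R) (d j s w).
Proof.
move=> Hw k; have := d_bracket k j 0 s w.
rewrite Hw (scalable_linear (d_linear _ _)) add0r mxE mulr0z scale0r subr0.
by move/eqP; rewrite subr_eq => /eqP ->; rewrite -scalerDl [mu k + _]addrC.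
Qed.

Lemma DD_weight mu j s u :
  weight_space d mu u -> weight_space d mu (DD e d j s u).
Proof.
by move=> /(d_weight j s)/(e_weight (- s)) Hu k; rewrite /DD Hu mxE intrN addrK.
Qed.

End DerivationConjugates.

Theorem lemma1 (n : nat) (J : lmodType CC)
  (e : Zn n -> J -> J) (d : 'I_n -> Zn n -> J -> J)
  (HJ : in_cat_J e d) (Hind : indecomposable e d)
  (lambda : 'I_n -> CC) (Hl : is_weight d lambda) :
  (forall j s u, weight_space d lambda u ->
      weight_space d lambda (DD e d j s u)) /\
  (forall j k s m u, weight_space d lambda u ->
      DD e d j s (DD e d k m u) - DD e d k m (DD e d j s u) =
      (m 0 j)%:~R *: (DD e d k (s + m) u - DD e d k m u)
      - (s 0 k)%:~R *: (DD e d j (s + m) u - DD e d j s u)).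
Proof.
case: HJ => [[e_linear [_ eD]] [[d_linear d_bracket] [_ [_ d_e]]]].
split=> [j s u | j k s m u _].
- exact: DD_weight.
- exact: DD_commutator.
Qed.
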